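(* Let $G$ be a graph and let $p\ge 2$ be an integer. Then $\mathrm{id}^{\leq p}(G)\leq \frac{|E(G)|}{\lfloor p/2\rfloor}+\chi'_s(G)$.
   Context: A matching $M$ of $G$ is induced if every edge of $G$ joining two endvertices of edges of $M$ belongs to $M$. A strong edge-colouring of $G$ is an edge-colouring in which each colour class is an induced matching; $\chi'_s(G)$ (the strong chromatic index) is the minimum number of colours in a strong edge-colouring of $G$. For an oriented graph $D$ and $X\subseteq V(D)$, the inversion of $X$ reverses every arc with both endvertices in $X$; a $(\leq p)$-inversion is the inversion of a set of at most $p$ vertices. $\mathrm{id}^{\leq p}(G)$ is the maximum, over all ordered pairs $(\vec G_1,\vec G_2)$ of orientations of $G$, of the minimum number of $(\leq p)$-inversions transforming $\vec G_1$ into $\vec G_2$. *)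

From mathcomp Require Import all_boot all_order all_algebra.
Set Implicit Arguments. Unset Strict Implicit. Unset Printing Implicit Defensive.

Section Graphs.
Variable T : finType.

Definition simple_graph (e : rel T) : Prop := symmetric e /\ irreflexive e.

Definition edges (e : rel T) : {set {set T}} :=
  [set [set u; v] | u in T, v in T & e u v].

Definition endvertices (M : {set {set T}}) : {set T} := cover M.

Definition matching (e : rel T) (M : {set {set T}}) : bool :=
  (M \subset edges e) &&
  [forall f in M, forall g in M, (f != g) ==> [disjoint f & g]].

Definition induced_matching (e : rel T) (M : {set {set T}}) : bool :=
  matching e M &&
  [forall h in edges e, (h \subset endvertices M) ==> (h \in M)].

Definition strong_edge_colouring (e : rel T) (k : nat)
    (c : {ffun {set T} -> 'I_k}) : bool :=
  [forall i : 'I_k, induced_matching e [set f in edges e | c f == i]].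

Definition has_strong_edge_colouring (e : rel T) (k : nat) : bool :=
  [exists c : {ffun {set T} -> 'I_k}, strong_edge_colouring e c].

(* Strong chromatic index: least k <= |E| admitting a strong edge-colouring
   with k colours (|E| colours always suffice, so the default value #|E| is
   never spuriously used). *)
Definition strong_chromatic_index (e : rel T) : nat :=
  \big[minn/#|edges e|]_(k < #|edges e|.+1
     | has_strong_edge_colouring e k) (k : nat).

(* Orientation of G: a relation [o] (o u v means arc u -> v) such that every
   edge gets exactly one direction and only edges get arcs. *)
Definition orientation (e : rel T) (o : rel T) : Prop :=
  (forall u v, o u v -> e u v) /\
  (forall u v, e u v -> o u v (+) o v u).

Definition invert (X : {set T}) (o : rel T) : rel T :=
  fun u v => if (u \in X) && (v \in X) then o v u else o u v.

Definition invert_seq (s : seq {set T}) (o : rel T) : rel T :=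
  foldl (fun o' X => invert X o') o s.

End Graphs.

(* Let D be the set of edges on which the two orientations differ, and take a
   labelling of the edges in which every class is an induced matching: a
   strong edge-colouring with chi'_s(G) colours, or one colour per edge.  Cut
   the edges of D in each class into batches of q = floor(p/2) edges and invert
   the endvertex set of each batch.  Such a set has at most 2q <= p vertices,
   and since the class is induced the only edges inside it are those of the
   batch, so every edge of D is reversed exactly once and every other edge is
   not reversed at all.  A class with d edges of D needs at most d/q + 1
   batches, whence at most |D|/q + chi'_s(G) <= |E|/q + chi'_s(G) inversions. *)

From mathcomp Require Import all_boot all_order all_algebra.
From mathcomp Require Import zify.

Set Implicit Arguments.
Unset Strict Implicit.
Unset Printing Implicit Defensive.

Section Chunks.
Variable A : eqType.

(* [size s %/ q + 1] consecutive blocks of at most [q] items; the last block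
   may be empty. *)
Definition chunks (q : nat) (s : seq A) : seq (seq A) :=
  reshape (nseq (size s %/ q).+1 q) s.

Lemma flatten_chunks q s : (0 < q)%N -> flatten (chunks q s) = s.
Proof.
by move=> q0; rewrite reshapeKr // sumn_nseq mulnC ltnW // ltn_ceil.
Qed.

Lemma size_mem_chunks q s C : C \in chunks q s -> (size C <= q)%N.
Proof.
rewrite /chunks; move: (size s %/ q).+1 => n; elim: n s => [|n IHn] s //=.
rewrite in_cons => /orP [/eqP -> | /IHn //].
by rewrite size_take_min geq_minl.
Qed.

Lemma size_chunks_le q s : (q * size (chunks q s) <= size s + q)%N.
Proof. by rewrite size_reshape size_nseq mulnS addnC leq_add2r mulnC leq_divM. Qed.

Lemma count_mem_flatten (ss : seq (seq A)) x : uniq (flatten ss) ->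
  count (fun C => x \in C) ss = (x \in flatten ss).
Proof.
elim: ss => //= C ss IHss; rewrite cat_uniq mem_cat => /and3P [_ disj /IHss ->].
case: (boolP (x \in C)) => //= xC.
by case: (boolP (x \in flatten ss)) => // xss; case/hasP: disj; exists x.
Qed.

End Chunks.

Lemma sumn_mul_le (I : Type) (f g : I -> nat) q (r : seq I) :
  (forall i, q * f i <= g i + q)%N ->
  (q * sumn (map f r) <= sumn (map g r) + q * size r)%N.
Proof. by move=> fg; elim: r => //= i r IHr; have := fg i; lia. Qed.

Lemma sumn_count_eq_le (A : eqType) (c : A -> nat) (r : seq nat) (s : seq A) :
  uniq r -> (sumn [seq count (fun g => c g == i) s | i <- r] <= size s)%N.
Proof.
move=> Ur; apply: leq_trans (count_size (fun g => c g \in r) s).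
elim: r Ur => //= i r IHr /andP [ir Ur].
rewrite (leq_trans (leq_add (leqnn _) (IHr Ur))) // -count_predUI.
rewrite (@eq_count _ (predI _ _) pred0) ?count_pred0 ?addn0 => [|g /=].
  by apply/eq_leq/eq_count => g; rewrite /= in_cons.
by apply/negbTE; apply: contra ir => /andP [/eqP <-].
Qed.

Lemma card_bigcup_seq_le (T : finType) (C : seq {set T}) n :
  (forall g, g \in C -> #|g| <= n)%N -> (#|\bigcup_(g <- C) g| <= n * size C)%N.
Proof.
elim: C => [|g C IHC] cardC; first by rewrite big_nil cards0.
rewrite big_cons /= mulnS (leq_trans (leq_card_setU _ _)) // leq_add //.
  by rewrite cardC ?mem_head.
by apply: IHC => h hC; rewrite cardC // in_cons hC orbT.
Qed.

Lemma invert_seqE (T : finType) (s : seq {set T}) (o : rel T) u v :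
  invert_seq s o u v =
  if odd (count (fun X : {set T} => (u \in X) && (v \in X)) s) then o v u else o u v.
Proof.
elim: s o => [|X s IHs] o //=; rewrite IHs /invert oddD.
by case: (u \in X); case: (v \in X); case: (odd _).
Qed.

Section Graph.
Variables (T : finType) (e : rel T).

Lemma edges_set2 u v : e u v -> [set u; v] \in edges e.
Proof. by move=> euv; apply/imset2P; exists u v; rewrite ?inE. Qed.

Lemma card_edge f : f \in edges e -> (#|f| <= 2)%N.
Proof. by case/imset2P=> u v _ _ ->; rewrite cards2; case: (u != v). Qed.

Lemma orientation_swap {o u v} : orientation e o -> e u v -> o v u = ~~ o u v.
Proof. by case=> _ oxor /oxor; case: (o u v); case: (o v u). Qed.

Lemma orientation_nonedge {o u v} : orientation e o -> ~~ e u v -> o u v = false.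
Proof. by case=> oe _ neuv; apply/negP => /oe euv; rewrite euv in neuv. Qed.

Definition disagreement (o1 o2 : rel T) : {set {set T}} :=
  [set [set u; v] | u in T, v in T & e u v && (o1 u v != o2 u v)].

Lemma disagreement_subset o1 o2 : disagreement o1 o2 \subset edges e.
Proof.
apply/subsetP => f /imset2P [u v _]; rewrite !inE => /and3P [_ euv _] ->.
exact: edges_set2.
Qed.

Lemma mem_disagreement o1 o2 u v : simple_graph e ->
  orientation e o1 -> orientation e o2 -> e u v ->
  ([set u; v] \in disagreement o1 o2) = (o1 u v != o2 u v).
Proof.
move=> [_ eirr] O1 O2 euv; apply/idP/idP; last first.
  by move=> d12; apply/imset2P; exists u v; rewrite ?inE ?euv ?d12.
case/imset2P=> a b _; rewrite !inE => /and3P [_ eab dab] uvab.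
have /set2P ua : u \in [set a; b] by rewrite -uvab set21.
have /set2P vb : v \in [set a; b] by rewrite -uvab set22.
move: euv; case: ua => ->; case: vb => ->; rewrite ?eirr // => _.
by rewrite (orientation_swap O1 eab) (orientation_swap O2 eab) (inj_eq negb_inj).
Qed.

Lemma invert_seq_disagreement o1 o2 (s : seq {set T}) : simple_graph e ->
  orientation e o1 -> orientation e o2 ->
  (forall u v, e u v ->
     count (fun X : {set T} => (u \in X) && (v \in X)) s =
     ([set u; v] \in disagreement o1 o2)) ->
  forall u v, invert_seq s o1 u v = o2 u v.
Proof.
move=> G O1 O2 count_s u v; rewrite invert_seqE.
have [euv | neuv] := boolP (e u v); last first.
  have nevu : ~~ e v u by rewrite (proj1 G).
  by rewrite !(orientation_nonedge O1) ?(orientation_nonedge O2) //; case: ifP.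
rewrite count_s // mem_disagreement // (orientation_swap O1 euv).
by case: (o1 u v); case: (o2 u v).
Qed.

End Graph.

Section LabelledInversions.
Variables (T : finType) (e : rel T).

(* Every label class is an induced matching: an edge meeting two edges of the
   same class is one of them. *)
Definition induced_labelling (c : {set T} -> nat) : Prop :=
  forall f g u v, f \in edges e -> g \in edges e -> c f = c g ->
    e u v -> u \in f -> v \in g -> [set u; v] = f.

Lemma induced_labelling_bigcup c i (C : seq {set T}) u v :
  induced_labelling c -> (forall f, f \in C -> (f \in edges e) && (c f == i)) ->
  e u v ->
  (u \in \bigcup_(g <- C) g) && (v \in \bigcup_(g <- C) g) = ([set u; v] \in C).
Proof.
move=> indc Ci euv; rewrite bigcup_seq; apply/idP/idP.
  case/andP=> /bigcupP [f fC uf] /bigcupP [g gC vg].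
  have /andP [fE /eqP cf] := Ci _ fC; have /andP [gE /eqP cg] := Ci _ gC.
  by rewrite (indc f g u v) // cf cg.
by move=> uvC; apply/andP; split; apply/bigcupP; exists [set u; v];
  rewrite // ?set21 ?set22.
Qed.

Variables (q k : nat) (c : {set T} -> nat) (D : {set {set T}}).

Definition label_class i : seq {set T} := [seq f <- enum D | c f == i].

(* A batch of at most [q] edges of one class is inverted through its set of
   endvertices, which has at most [2 q] vertices and, the class being induced,
   spans no edge outside the batch. *)
Definition class_inversions i : seq {set T} :=
  [seq \bigcup_(g <- C) g | C <- chunks q (label_class i)].

Definition labelled_inversions : seq {set T} :=
  flatten [seq class_inversions i | i <- iota 0 k].

Hypothesis q_gt0 : (0 < q)%N.
Hypothesis D_edges : D \subset edges e.
Hypothesis c_lt : forall f, f \in edges e -> (c f < k)%N.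
Hypothesis c_induced : induced_labelling c.

Lemma mem_label_class i f : f \in label_class i -> (f \in edges e) && (c f == i).
Proof. by rewrite mem_filter mem_enum => /andP [-> /(subsetP D_edges) ->]. Qed.

Lemma mem_chunk_label_class i C f :
  C \in chunks q (label_class i) -> f \in C -> (f \in edges e) && (c f == i).
Proof.
move=> Ci fC; apply: mem_label_class.
by rewrite -(flatten_chunks (label_class i) q_gt0); apply/flattenP; exists C.
Qed.

Lemma card_labelled_inversions X : X \in labelled_inversions -> (#|X| <= 2 * q)%N.
Proof.
case/flattenP=> _ /mapP [i _ ->] /mapP [C Ci ->].
apply: leq_trans (@card_bigcup_seq_le _ _ 2 _) _ => [g /(mem_chunk_label_class Ci)|].
  by case/andP=> /card_edge.
by rewrite leq_mul2l (size_mem_chunks Ci) orbT.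
Qed.

Lemma count_class_inversions i u v : e u v ->
  count (fun X : {set T} => (u \in X) && (v \in X)) (class_inversions i) =
  ([set u; v] \in label_class i).
Proof.
move=> euv; rewrite count_map.
rewrite (eq_in_count (a2 := fun C : seq {set T} => [set u; v] \in C)) => [|C Ci /=].
  by rewrite count_mem_flatten flatten_chunks // filter_uniq ?enum_uniq.
apply: (induced_labelling_bigcup c_induced) => // f.
exact: mem_chunk_label_class Ci.
Qed.

Lemma count_labelled_inversions u v : e u v ->
  count (fun X : {set T} => (u \in X) && (v \in X)) labelled_inversions =
  ([set u; v] \in D).
Proof.
move=> euv; rewrite count_flatten -map_comp.
rewrite (eq_map (g := fun i => ([set u; v] \in label_class i) : nat)); last first.
  by move=> i; apply: count_class_inversions.
rewrite sumn_count; case: (boolP ([set u; v] \in D)) => uvD; last first.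
  rewrite (eq_count (a2 := pred0)) ?count_pred0 // => i.
  by rewrite mem_filter mem_enum (negbTE uvD) andbF.
rewrite (eq_count (a2 := pred1 (c [set u; v]))) => [|i]; last first.
  by rewrite /= mem_filter mem_enum uvD andbT eq_sym.
by rewrite count_uniq_mem ?iota_uniq // mem_iota c_lt ?edges_set2.
Qed.

Lemma size_labelled_inversions : (q * size labelled_inversions <= #|D| + q * k)%N.
Proof.
rewrite size_flatten /shape -map_comp.
rewrite (eq_map (g := fun i => size (chunks q (label_class i)))) => [|i]; last first.
  exact: size_map.
apply: leq_trans (sumn_mul_le _ (fun i => size_chunks_le q (label_class i))) _.
rewrite size_iota leq_add2r cardE.
under eq_map do rewrite size_filter.
exact: sumn_count_eq_le (iota_uniq 0 k).
Qed.

End LabelledInversions.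

Lemma exists_inversions_of_labelling (T : finType) (e o1 o2 : rel T) q k
    (c : {set T} -> nat) :
  simple_graph e -> (0 < q)%N -> orientation e o1 -> orientation e o2 ->
  (forall f, f \in edges e -> c f < k)%N -> induced_labelling e c ->
  exists s : seq {set T},
    (forall X, X \in s -> #|X| <= 2 * q)%N /\
    (forall u v, invert_seq s o1 u v = o2 u v) /\
    (q * size s <= #|edges e| + q * k)%N.
Proof.
move=> G q_gt0 O1 O2 c_lt c_ind; set D := disagreement e o1 o2.
have D_edges : D \subset edges e := disagreement_subset e o1 o2.
exists (labelled_inversions q k c D); split; [|split].
- exact: card_labelled_inversions q_gt0 D_edges.
- apply: (invert_seq_disagreement G O1 O2) => u v euv.
  exact: (count_labelled_inversions q_gt0 D_edges c_lt c_ind).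
- apply: leq_trans (size_labelled_inversions _ _ _ _) _.
  by rewrite leq_add2r subset_leq_card.
Qed.

Lemma strong_edge_colouring_induced (T : finType) (e : rel T) k
    (col : {ffun {set T} -> 'I_k}) :
  strong_edge_colouring e col -> induced_labelling e (fun f => col f : nat).
Proof.
move=> /forallP col_ind f g u v fE gE /val_inj cfg euv uf vg.
have /andP [/andP [_ /forall_inP M_match] /forall_inP M_ind] := col_ind (col f).
set M := [set h in edges e | col h == col f] in M_match M_ind.
have fM : f \in M by rewrite inE fE eqxx.
have gM : g \in M by rewrite inE gE cfg eqxx.
have uvM : [set u; v] \in M.
  apply: (implyP (M_ind _ (edges_set2 euv))); apply/subsetP => x /set2P [] ->;
    apply/bigcupP; [exists f | exists g] => //.
have /forall_inP /(_ _ fM) := M_match _ uvM.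
have [// | _ /= disj] := eqVneq [set u; v] f.
by have := disjointFr disj (set21 u v); rewrite uf.
Qed.

Lemma index_labelling_induced (T : finType) (e : rel T) :
  simple_graph e -> induced_labelling e (index^~ (enum (edges e))).
Proof.
move=> [_ eirr] f g u v fE gE /(congr1 (nth f (enum (edges e)))).
rewrite !nth_index ?mem_enum // => <- euv uf vf.
have uv : u != v by apply: contraTneq euv => ->; rewrite eirr.
apply/eqP; rewrite eqEcard cards2 uv (card_edge fE) andbT.
by apply/subsetP => x /set2P [] ->.
Qed.

Lemma strong_chromatic_index_labelling (T : finType) (e : rel T) :
  simple_graph e -> exists c : {set T} -> nat,
    (forall f, f \in edges e -> c f < strong_chromatic_index e)%N /\
    induced_labelling e c.
Proof.
move=> G.
have : strong_chromatic_index e = #|edges e| \/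
       has_strong_edge_colouring e (strong_chromatic_index e).
  apply: (big_ind (fun k => k = #|edges e| \/ has_strong_edge_colouring e k)) => //.
  - by left.
  - by move=> k l Pk Pl; rewrite /minn; case: ifP.
  - by move=> k col_k; right.
case=> [-> | /existsP [col col_strong]].
  exists (index^~ (enum (edges e))); split; last exact: index_labelling_induced.
  by move=> f fE; rewrite cardE index_mem mem_enum.
exists (fun f => col f : nat); split; first by move=> f _; apply: ltn_ord.
exact: strong_edge_colouring_induced.
Qed.

Import GRing.Theory Num.Theory.
Local Open Scope ring_scope.

Lemma ler_natdivD (q n m k : nat) : (0 < q)%N -> (q * n <= m + q * k)%N ->
  (n%:R : rat) <= m%:R / q%:R + k%:R.
Proof.
move=> q_gt0 qn_le; have q_pos : (0 : rat) < q%:R by rewrite ltr0n.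
rewrite -(ler_pM2r q_pos) mulrDl divfK ?lt0r_neq0 //.
by rewrite -!natrM -natrD ler_nat mulnC [(k * q)%N]mulnC.
Qed.

Theorem mainTheorem14 (T : finType) (e : rel T) (p : nat) :
  simple_graph e -> (2 <= p)%N ->
  forall o1 o2 : rel T, orientation e o1 -> orientation e o2 ->
  exists s : seq {set T},
    (forall X, X \in s -> #|X| <= p)%N /\
    (forall u v, invert_seq s o1 u v = o2 u v) /\
    ((size s)%:R : rat) <=
      (#|edges e|)%:R / (p./2)%:R + (strong_chromatic_index e)%:R.
Proof.
move=> G p_ge2 o1 o2 O1 O2.
have q_gt0 : (0 < p./2)%N by rewrite half_gt0.
have twice_q_le : (2 * p./2 <= p)%N by rewrite mul2n -{2}(odd_double_half p) leq_addl.
have [c [c_lt c_ind]] := strong_chromatic_index_labelling G.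
have [s [s_card [s_inv s_size]]] :=
  exists_inversions_of_labelling G q_gt0 O1 O2 c_lt c_ind.
exists s; split; last by split; last exact: ler_natdivD.
by move=> X /s_card /leq_trans; apply.
Qed.
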